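(* Consider the battery cost-minimization problem described in the context with fixed $t_0, T, K, Z, T_c, D$, and let $J(C_{\mathrm{ref}})$ denote its optimal (minimum) cost as a function of the battery capacity $C_{\mathrm{ref}}$. If $0\le C^1_{\mathrm{ref}} < C^2_{\mathrm{ref}}$, then $J(C^1_{\mathrm{ref}}) \ge J(C^2_{\mathrm{ref}})$.
   Context: Data: a time interval $[t_0,t_0+T]$ with $T>0$; a PV power profile $P_{\mathrm{pv}}(t)\ge 0$ and a (piecewise continuous) load profile $P_{\mathrm{load}}(t)$ on this interval; a time-of-use price $C_g(t)\ge 0$; constants $0<\eta_{\mathrm{pv}}\le 1$, $0<\eta_B\le 1$, $K>0$, $Z>0$, $T_c>0$, $D>0$, and a battery capacity $C_{\mathrm{ref}}\ge 0$. A control is a function $u$ on $[t_0,t_0+T]$; it determines states $E_B(t)$ and $\Delta C(t)$ via $E_B(t_0)=0$, $\Delta C(t_0)=0$, $\frac{dE_B}{dt}=u(t)/\eta_B$ if $u(t)<0$ and $\frac{dE_B}{dt}=\eta_B u(t)$ otherwise; $\frac{d\Delta C}{dt}=-Z u(t)/\eta_B$ if $u(t)<0$ and $\frac{d\Delta C}{dt}=0$ otherwise. A control is feasible (for capacity $C_{\mathrm{ref}}$) if for all $t\in[t_0,t_0+T]$: $E_B(t)\ge 0$; $E_B(t)+\Delta C(t)\le C_{\mathrm{ref}}$; $\eta_B u(t) T_c+\Delta C(t)\le C_{\mathrm{ref}}$ whenever $u(t)>0$; $-\frac{u(t)}{\eta_B}T_c+\Delta C(t)\le C_{\mathrm{ref}}$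 whenever $u(t)<0$; and $P_{\mathrm{load}}(t)-\eta_{\mathrm{pv}}P_{\mathrm{pv}}(t)+u(t)\le D$. The cost of a feasible control is $\int_{t_0}^{t_0+T} C_g(\tau)\big(P_{\mathrm{load}}(\tau)-\eta_{\mathrm{pv}}P_{\mathrm{pv}}(\tau)+u(\tau)\big)\,d\tau + K\,\Delta C(t_0+T)$, and $J(C_{\mathrm{ref}})$ is the minimum of this cost over all feasible controls. *)

From HB Require Import structures.
From mathcomp Require Import all_boot all_order all_algebra.
From mathcomp Require Import all_classical all_reals all_analysis.
Set Implicit Arguments. Unset Strict Implicit. Unset Printing Implicit Defensive.
Import Order.TTheory GRing.Theory Num.Theory numFieldNormedType.Exports.
Local Open Scope classical_set_scope.
Local Open Scope ring_scope.

Record battery_data (R : realType) := BatteryData {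
  t0 : R; hor : R;                      (* interval [t0, t0 + hor], hor = T *)
  P_pv : R -> R; P_load : R -> R; C_g : R -> R;
  eta_pv : R; eta_B : R; K_ : R; Z_ : R; T_c : R; D_ : R }.

Definition piecewise_continuous (R : realType) (a b : R) (f : R -> R) :=
  exists S : seq R, forall x : R, x \in `[a, b] -> x \notin S ->
    f @ within `[a, b]%classic (nbhs x) --> f x.

Definition valid_data (R : realType) (P : battery_data R) : Prop :=
  [/\ 0 < hor P,
      (forall t, 0 <= P_pv P t),
      piecewise_continuous (t0 P) (t0 P + hor P) (P_load P),
      (forall t, 0 <= C_g P t) &
      [/\ 0 < eta_pv P <= 1, 0 < eta_B P <= 1,
         0 < K_ P, 0 < Z_ P & 0 < T_c P /\ 0 < D_ P]].

Section Problem.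
Variables (R : realType) (P : battery_data R).

Let mu := (@lebesgue_measure R).
Let I : set R := `[t0 P, t0 P + hor P]%classic.

Definition dEB (v : R) : R := if v < 0 then v / eta_B P else eta_B P * v.
Definition dDC (v : R) : R := if v < 0 then - (Z_ P * v) / eta_B P else 0.

(* states obtained from E_B(t0) = 0, Delta C(t0) = 0 *)
Definition E_B (u : R -> R) (t : R) : R := Rintegral mu `[t0 P, t]%classic (dEB \o u).
Definition DeltaC (u : R -> R) (t : R) : R := Rintegral mu `[t0 P, t]%classic (dDC \o u).

Definition P_grid (u : R -> R) (t : R) : R :=
  P_load P t - eta_pv P * P_pv P t + u t.

(* admissible control: Lebesgue integrable on the horizon, and such that the
   cost integrand is integrable (so all integrals below are meaningful) *)
Definition admissible (u : R -> R) : Prop :=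
  mu.-integrable I (EFin \o u) /\
  mu.-integrable I (EFin \o (fun t => C_g P t * P_grid u t)).

Definition feasible (Cref : R) (u : R -> R) : Prop :=
  admissible u /\
  forall t, t \in I ->
    [/\ 0 <= E_B u t,
        E_B u t + DeltaC u t <= Cref,
        (0 < u t -> eta_B P * u t * T_c P + DeltaC u t <= Cref),
        (u t < 0 -> - (u t / eta_B P) * T_c P + DeltaC u t <= Cref) &
        P_grid u t <= D_ P].

Definition cost (u : R -> R) : R :=
  Rintegral mu I (fun t => C_g P t * P_grid u t) + K_ P * DeltaC u (t0 P + hor P).

(* optimal cost: the infimum (the minimum whenever it is attained) of the
   cost over feasible controls, in the extended reals (+oo if infeasible) *)
Definition J (Cref : R) : \bar R :=
  ereal_inf [set (cost u)%:E | u in feasible Cref].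

End Problem.

From HB Require Import structures.
From mathcomp Require Import all_boot all_order all_algebra.
From mathcomp Require Import all_classical all_reals all_analysis.
Import Order.TTheory GRing.Theory Num.Theory.
Local Open Scope ring_scope.

(* Every constraint bounds the capacity from below, so enlarging the capacity
   enlarges the feasible set, and an infimum over a larger set is smaller. *)

Lemma feasible_le (R : realType) (P : battery_data R) (C1 C2 : R) (u : R -> R) :
  C1 <= C2 -> feasible P C1 u -> feasible P C2 u.
Proof.
move=> le12 [adm H]; split=> // t tI.
have [h1 h2 h3 h4 h5] := H t tI.
split=> //.
- exact: le_trans h2 le12.
- by move=> /h3 h; exact: le_trans h le12.
- by move=> /h4 h; exact: le_trans h le12.
Qed.

Lemma J_le (R : realType) (P : battery_data R) (C1 C2 : R) :
  C1 <= C2 -> (J P C2 <= J P C1)%E.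
Proof.
move=> le12; apply: le_ereal_inf => _ [u feas <-].
by exists u => //; exact: feasible_le feas.
Qed.

Theorem proposition2 (R : realType) (P : battery_data R) (HP : valid_data P)
  (C1 C2 : R) (hC1 : 0 <= C1) (h12 : C1 < C2) :
  (J P C2 <= J P C1)%E.
Proof. exact/J_le/ltW. Qed.
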